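(* In the near-field model below, with $\mathbf w_{\mathrm s}=\mathbf h_{\mathrm s}^*/\|\mathbf h_{\mathrm s}\|$, $p>0$, $L\in\mathbb Z_{>0}$, $\alpha_{\mathrm s}>0$, the downlink sensing rate $\mathcal R^{\mathrm s}_{\mathrm{d,s}}=\frac1L\log_2(1+pL\alpha_{\mathrm s}\|\mathbf h_{\mathrm s}\|^4)$ satisfies, as $N_y,N_z\to\infty$ with all other parameters fixed, $$\lim_{N_y,N_z\to\infty}\mathcal R^{\mathrm s}_{\mathrm{d,s}}=\frac1L\log_2\!\Big(1+\frac{pL\alpha_{\mathrm s}\zeta^2}{9}\Big).$$
   Context: Near-field model: a uniform planar array lies in the $y$–$z$ plane centered at the origin, with $N=N_yN_z$ elements ($N_y,N_z$ odd). Element $(n_y,n_z)$, $n_y\in\{-\frac{N_y-1}2,\dots,\frac{N_y-1}2\}$, $n_z\in\{-\frac{N_z-1}2,\dots,\frac{N_z-1}2\}$, is a $\sqrt A\times\sqrt A$ square centered at $(0,n_yd,n_zd)$, with spacing $d>\sqrt A$; $\zeta=A/d^2\in(0,1]$; $\lambda>0$ is the wavelength. The target is at distance $r_{\mathrm s}$, elevation $\theta_{\mathrm s}\in[0,\pi]$, azimuth $\phi_{\mathrm s}\in[-\pi/2,\pi/2]$; $\Psi_{\mathrm s}=\sin\theta_{\mathrm s}\cos\phi_{\mathrm s}$, $\Phi_{\mathrm s}=\sin\theta_{\mathrm s}\sin\phi_{\mathrm s}$, $\Omega_{\mathrm s}=\cos\theta_{\mathrm s}$, $\epsilon_{\mathrm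 s}=d/r_{\mathrm s}$, $r_{n_y,n_z}=r_{\mathrm s}\sqrt{(n_y\epsilon_{\mathrm s}-\Phi_{\mathrm s})^2+(n_z\epsilon_{\mathrm s}-\Omega_{\mathrm s})^2+\Psi_{\mathrm s}^2}$. The channel $\mathbf h_{\mathrm s}\in\mathbb C^N$ has entries $\sqrt{A\frac{r_{\mathrm s}^3\Psi_{\mathrm s}^3+r_{\mathrm s}\Psi_{\mathrm s}(r_{\mathrm s}\Omega_{\mathrm s}-n_zd)^2}{4\pi r_{n_y,n_z}^5}}\,e^{-\mathrm j\frac{2\pi}{\lambda}r_{n_y,n_z}}$. The paper assumes throughout $r_{\mathrm s}\gg d$, $r_{\mathrm s}\gg\sqrt A$, so $\epsilon_{\mathrm s}\ll1$. *)

From Stdlib Require Import Reals Lra.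
From Coquelicot Require Import Coquelicot.
Open Scope R_scope.

Definition Psi (th ph : R) : R := sin th * cos ph.
Definition Phi (th ph : R) : R := sin th * sin ph.
Definition Omega (th : R) : R := cos th.

(* distance from the target (r, th, ph) to element (ny, nz) with spacing d *)
Definition rdist (d r th ph ny nz : R) : R :=
  let eps := d / r in
  r * sqrt ((ny * eps - Phi th ph) ^ 2 + (nz * eps - Omega th) ^ 2 + Psi th ph ^ 2).

Definition h_entry (A d lam r th ph ny nz : R) : C :=
  let rn := rdist d r th ph ny nz in
  let amp := sqrt (A * (r ^ 3 * Psi th ph ^ 3
                        + r * Psi th ph * (r * Omega th - nz * d) ^ 2)
                   / (4 * PI * rn ^ 5)) in
  (amp * cos (2 * PI / lam * rn), - (amp * sin (2 * PI / lam * rn))).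

(* squared norm ||h_s||^2 for N_y = 2a+1, N_z = 2b+1 elements:
   n_y ranges over -a..a, n_z over -b..b *)
Definition hnorm_sq (A d lam r th ph : R) (a b : nat) : R :=
  sum_f_R0 (fun k =>
    sum_f_R0 (fun l =>
      Cmod (h_entry A d lam r th ph (INR k - INR a) (INR l - INR b)) ^ 2)
      (2 * b)) (2 * a).

Definition hnorm (A d lam r th ph : R) (a b : nat) : R :=
  sqrt (hnorm_sq A d lam r th ph a b).

Definition log2 (x : R) : R := ln x / ln 2.

Definition rate_ds (p alpha : R) (L : nat) (A d lam r th ph : R) (a b : nat) : R :=
  / INR L * log2 (1 + p * INR L * alpha * hnorm A d lam r th ph a b ^ 4).

Definition zeta (A d : R) : R := A / d ^ 2.

From Stdlib Require Import Reals Lra.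
From Coquelicot Require Import Coquelicot.
Open Scope R_scope.

(* With [e = d / r], [||h_s||^2] is [zeta / (4 PI)] times a Riemann sum, of mesh [e], of
   [Psi (y^2 + Psi^2) / (x^2 + y^2 + Psi^2)^(5/2)] over a rectangle of side about [N e].
   This kernel integrates to [4 PI / 3] over the plane: in [x] it gives
   [4/3 Psi / (y^2 + Psi^2)], a Lorentzian of integral [4/3 PI] in [y].  Every
   one-dimensional sum involved has an even summand decreasing in [|x|], so it is within
   [2 h f 0] of the integral of an explicit antiderivative, whose tails vanish as the
   rectangle grows.  Hence [||h_s||^2 -> zeta / 3] as [e -> 0] and [N e -> oo], and the
   rate, continuous in [||h_s||^2], converges. *)

(* [sum_f_R0] includes index [n]: the sum has [n + 1] cells covering [x0, x0 + (n+1) h]. *)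
Definition left_riemann_sum (h x0 : R) (n : nat) (f : R -> R) : R :=
  sum_f_R0 (fun k => h * f (x0 + INR k * h)) n.

Lemma left_riemann_sum_le h x0 n f g :
  0 <= h -> (forall x, f x <= g x) -> left_riemann_sum h x0 n f <= left_riemann_sum h x0 n g.
Proof.
  intros Hh Hfg. apply sum_Rle. intros k _. apply Rmult_le_compat_l; auto.
Qed.

Lemma left_riemann_sum_scal h x0 n c f :
  left_riemann_sum h x0 n (fun x => c * f x) = c * left_riemann_sum h x0 n f.
Proof.
  unfold left_riemann_sum. rewrite scal_sum. apply sum_eq. intros k _. ring.
Qed.

Lemma left_riemann_sum_plus h x0 n f g :
  left_riemann_sum h x0 n (fun x => f x + g x)
  = left_riemann_sum h x0 n f + left_riemann_sum h x0 n g.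
Proof.
  unfold left_riemann_sum. rewrite <- sum_plus. apply sum_eq. intros k _. ring.
Qed.

Section RiemannError.

Variables (f P V : R -> R).
Hypothesis P_antideriv : forall x, derivable_pt_lim P x (f x).
Hypothesis V_dominates : forall x y, x <= y -> Rabs (f x - f y) <= V y - V x.

Lemma riemann_cell_error h x :
  0 < h -> Rabs (h * f x - (P (x + h) - P x)) <= h * (V (x + h) - V x).
Proof.
  intros Hh.
  destruct (MVT_cor2 P f x (x + h)) as [c [HPc Hc]]; [lra | intros; apply P_antideriv |].
  rewrite HPc.
  replace (h * f x - f c * (x + h - x)) with (h * (f x - f c)) by ring.
  rewrite Rabs_mult, Rabs_pos_eq by lra.
  apply Rmult_le_compat_l; [lra |].
  pose proof (V_dominates x c ltac:(lra)).
  pose proof (V_dominates c (x + h) ltac:(lra)).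
  pose proof (Rabs_pos (f c - f (x + h))).
  lra.
Qed.

Lemma left_riemann_sum_error h x0 n :
  0 < h ->
  Rabs (left_riemann_sum h x0 n f - (P (x0 + INR (S n) * h) - P x0))
  <= h * (V (x0 + INR (S n) * h) - V x0).
Proof.
  intros Hh. unfold left_riemann_sum.
  induction n as [|n IH].
  - simpl. replace (x0 + 1 * h) with (x0 + h) by ring.
    replace (x0 + 0 * h) with x0 by ring.
    now apply riemann_cell_error.
  - rewrite tech5.
    set (x := x0 + INR (S n) * h) in *.
    replace (x0 + INR (S (S n)) * h) with (x + h) by (unfold x; rewrite (S_INR (S n)); ring).
    pose proof (riemann_cell_error h x Hh).
    match goal with |- Rabs (?s + ?t - (?a - ?b)) <= _ =>
      replace (s + t - (a - b)) with ((s - (P x - b)) + (t - (a - P x))) by ring end.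
    eapply Rle_trans; [apply Rabs_triang | lra].
Qed.

End RiemannError.

Lemma left_riemann_sum_error_even (g P : R -> R) h x0 n :
  0 < h ->
  (forall x, derivable_pt_lim P x (g (x ^ 2))) ->
  (forall u, 0 <= u -> 0 <= g u) ->
  (forall u v, 0 <= u <= v -> g v <= g u) ->
  Rabs (left_riemann_sum h x0 n (fun x => g (x ^ 2)) - (P (x0 + INR (S n) * h) - P x0))
  <= 2 * h * g 0.
Proof.
  intros Hh HP Hpos Hdecr.
  set (V t := if Rle_dec t 0 then g (t ^ 2) else 2 * g 0 - g (t ^ 2)).
  assert (Hrange : forall t, 0 <= g (t ^ 2) <= g 0).
  { intros t. split; [apply Hpos; nra | apply Hdecr; nra]. }
  assert (HV : forall x y, x <= y -> Rabs (g (x ^ 2) - g (y ^ 2)) <= V y - V x).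
  { intros x y Hxy. unfold V.
    destruct (Rle_dec y 0), (Rle_dec x 0); try lra.
    - assert (g (x ^ 2) <= g (y ^ 2)) by (apply Hdecr; nra).
      rewrite Rabs_left1; lra.
    - pose proof (Hrange x); pose proof (Hrange y).
      apply Rabs_le; lra.
    - assert (g (y ^ 2) <= g (x ^ 2)) by (apply Hdecr; nra).
      rewrite Rabs_pos_eq; lra. }
  eapply Rle_trans; [apply (left_riemann_sum_error _ P V HP HV h x0 n Hh) |].
  replace (2 * h * g 0) with (h * (2 * g 0)) by ring.
  apply Rmult_le_compat_l; [lra |].
  unfold V.
  pose proof (Hrange x0); pose proof (Hrange (x0 + INR (S n) * h)).
  destruct (Rle_dec (x0 + INR (S n) * h) 0), (Rle_dec x0 0); lra.
Qed.

Definition Q (K x : R) : R := x * (2 * x ^ 2 + 3 * K) / (3 * sqrt (x ^ 2 + K) ^ 3).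

Lemma derivable_Q K x :
  0 < K -> derivable_pt_lim (Q K) x (K ^ 2 / sqrt (x ^ 2 + K) ^ 5).
Proof.
  intros HK. apply is_derive_Reals. unfold Q.
  assert (HD : 0 < x ^ 2 + K) by nra.
  pose proof (sqrt_lt_R0 _ HD) as Hs. pose proof (sqrt_sqrt _ (Rlt_le _ _ HD)) as Hss.
  auto_derive; replace (x * (x * 1)) with (x ^ 2) by ring.
  - repeat split; try lra. apply Rgt_not_eq.
    apply Rmult_lt_0_compat; [lra | repeat apply Rmult_lt_0_compat; lra].
  - set (s := sqrt (x ^ 2 + K)) in *. clearbody s.
    replace K with (s * s - x ^ 2) by lra. field. lra.
Qed.

Lemma Q_opp K x : Q K (- x) = - Q K x.
Proof. unfold Q. replace ((- x) ^ 2) with (x ^ 2) by ring. unfold Rdiv. ring. Qed.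

Lemma Rabs_Q_le K x : 0 < K -> Rabs (Q K x) <= 2 / 3.
Proof.
  intros HK. unfold Q.
  assert (HD : 0 < x ^ 2 + K) by nra.
  pose proof (sqrt_lt_R0 _ HD) as Hs. pose proof (sqrt_sqrt _ (Rlt_le _ _ HD)) as Hss.
  set (s := sqrt (x ^ 2 + K)) in *. clearbody s.
  assert (Hs3 : 0 < s ^ 3) by (apply pow_lt; lra).
  assert (Hnum : Rabs (x * (2 * x ^ 2 + 3 * K)) <= 2 * s ^ 3).
  { rewrite <- (Rabs_pos_eq (2 * s ^ 3)) by lra.
    apply Rsqr_le_abs_0. unfold Rsqr.
    replace (2 * s ^ 3 * (2 * s ^ 3)) with (4 * (s * s) ^ 3) by ring.
    rewrite Hss. nra. }
  rewrite Rabs_div, (Rabs_pos_eq (3 * s ^ 3)) by lra.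
  replace (2 / 3) with (2 * s ^ 3 / (3 * s ^ 3)) by (field; lra).
  apply Rmult_le_compat_r; [left; apply Rinv_0_lt_compat | ]; lra.
Qed.

Lemma Q_ge K x : 0 < K -> 0 <= x -> 2 / 3 - 2 / 3 * (K / (x ^ 2 + K)) <= Q K x.
Proof.
  intros HK Hx. unfold Q.
  assert (HD : 0 < x ^ 2 + K) by nra.
  pose proof (sqrt_lt_R0 _ HD) as Hs. pose proof (sqrt_sqrt _ (Rlt_le _ _ HD)) as Hss.
  set (s := sqrt (x ^ 2 + K)) in *. clearbody s.
  replace (2 / 3 - 2 / 3 * (K / (x ^ 2 + K))) with (2 * x * s * x / (3 * s ^ 3))
    by (replace K with (s * s - x ^ 2) by lra; field; lra).
  apply Rmult_le_compat_r; [left; apply Rinv_0_lt_compat; pose proof (pow_lt s 3); nra |].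
  rewrite (Rmult_comm x (2 * x ^ 2 + 3 * K)).
  apply Rmult_le_compat_r; [lra |].
  apply Rsqr_incr_0_var; [unfold Rsqr | nra].
  replace (2 * x * s * (2 * x * s)) with (4 * x ^ 2 * (s * s)) by ring.
  rewrite Hss. nra.
Qed.

Definition inner_sum (K e x0 : R) (n : nat) : R :=
  left_riemann_sum e x0 n (fun x => K ^ 2 / sqrt (x ^ 2 + K) ^ 5).

Lemma inner_sum_error K e x0 n :
  0 < K -> 0 < e ->
  Rabs (inner_sum K e x0 n - (Q K (x0 + INR (S n) * e) - Q K x0)) <= 2 * e / sqrt K.
Proof.
  intros HK He.
  pose proof (left_riemann_sum_error_even (fun u => K ^ 2 / sqrt (u + K) ^ 5) (Q K) e x0 n He
    (fun x => derivable_Q K x HK)) as Herr.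
  replace (2 * e / sqrt K) with (2 * e * (K ^ 2 / sqrt (0 + K) ^ 5)).
  - apply Herr.
    + intros u Hu. apply Rdiv_le_0_compat; [nra | apply pow_lt, sqrt_lt_R0; lra].
    + intros u v Huv. apply Rmult_le_compat_l; [nra |].
      apply Rinv_le_contravar; [apply pow_lt, sqrt_lt_R0; lra |].
      apply pow_incr. split; [apply sqrt_pos | apply sqrt_le_1_alt; lra].
  - rewrite Rplus_0_l.
    pose proof (sqrt_lt_R0 _ HK). pose proof (sqrt_sqrt _ (Rlt_le _ _ HK)) as Hss.
    replace (K ^ 2) with ((sqrt K * sqrt K) ^ 2) by now rewrite Hss.
    field. lra.
Qed.

Lemma inner_sum_le K e x0 n :
  0 < K -> 0 < e -> inner_sum K e x0 n <= 4 / 3 + 2 * e / sqrt K.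
Proof.
  intros HK He.
  pose proof (proj1 (Rabs_le_between' _ _ _) (inner_sum_error K e x0 n HK He)).
  pose proof (proj1 (Rabs_le_between _ _) (Rabs_Q_le K (x0 + INR (S n) * e) HK)).
  pose proof (proj1 (Rabs_le_between _ _) (Rabs_Q_le K x0 HK)).
  lra.
Qed.

Lemma inner_sum_ge K e x0 n W :
  0 < K -> 0 < e -> 0 <= W -> W <= - x0 -> W <= x0 + INR (S n) * e ->
  4 / 3 - 4 / 3 * (K / (W ^ 2 + K)) - 2 * e / sqrt K <= inner_sum K e x0 n.
Proof.
  intros HK He HW Hx0 Hx1.
  pose proof (proj1 (Rabs_le_between' _ _ _) (inner_sum_error K e x0 n HK He)).
  assert (Htail : forall x, W <= x -> 2 / 3 - 2 / 3 * (K / (W ^ 2 + K)) <= Q K x).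
  { intros x Hx. eapply Rle_trans; [| apply Q_ge; lra].
    enough (K / (x ^ 2 + K) <= K / (W ^ 2 + K)) by lra.
    apply Rmult_le_compat_l; [lra |]. apply Rinv_le_contravar; nra. }
  pose proof (Htail _ Hx1). pose proof (Htail _ Hx0). rewrite Q_opp in *.
  lra.
Qed.

Lemma atan_le_id x : 0 <= x -> atan x <= x.
Proof.
  intros [Hx | <-]; [| rewrite atan_0; lra].
  destruct (MVT_cor2 atan (fun t => / (1 + t ^ 2)) 0 x Hx) as [c [Hc _]].
  { intros c _. apply derivable_pt_lim_atan. }
  rewrite atan_0, !Rminus_0_r in Hc. rewrite Hc.
  rewrite <- (Rmult_1_l x) at 2. apply Rmult_le_compat_r; [lra |].
  rewrite <- Rinv_1. apply Rinv_le_contravar; nra.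
Qed.

Lemma PI2_sub_atan_le t : 0 < t -> PI / 2 - atan t <= / t.
Proof.
  intros Ht. rewrite <- atan_inv by exact Ht.
  apply atan_le_id. left. now apply Rinv_0_lt_compat.
Qed.

Definition lorentzian (k y : R) : R := k / (y ^ 2 + k ^ 2).

Lemma derivable_atan_scaled k x :
  0 < k -> derivable_pt_lim (fun x => atan (x / k)) x (lorentzian k x).
Proof.
  intros Hk. apply is_derive_Reals. unfold lorentzian.
  auto_derive; [easy |]. unfold Rsqr. field. split; [nra | lra].
Qed.

Lemma lorentzian_sum_error k e y0 m :
  0 < k -> 0 < e ->
  Rabs (left_riemann_sum e y0 m (lorentzian k)
        - (atan ((y0 + INR (S m) * e) / k) - atan (y0 / k)))
  <= 2 * e / k.
Proof.
  intros Hk He.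
  replace (2 * e / k) with (2 * e * (k / (0 + k ^ 2))) by (field; lra).
  apply (left_riemann_sum_error_even (fun u => k / (u + k ^ 2)) (fun y => atan (y / k)));
    [exact He | intros; now apply derivable_atan_scaled | |].
  - intros u Hu. apply Rdiv_le_0_compat; nra.
  - intros u v Huv. apply Rmult_le_compat_l; [lra |]. apply Rinv_le_contravar; nra.
Qed.

Lemma lorentzian_sum_le k e y0 m :
  0 < k -> 0 < e -> left_riemann_sum e y0 m (lorentzian k) <= PI + 2 * e / k.
Proof.
  intros Hk He.
  pose proof (proj1 (Rabs_le_between' _ _ _) (lorentzian_sum_error k e y0 m Hk He)).
  pose proof (atan_bound ((y0 + INR (S m) * e) / k)). pose proof (atan_bound (y0 / k)).
  lra.
Qed.

Lemma lorentzian_sum_ge k e y0 m W :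
  0 < k -> 0 < e -> 0 < W -> W <= - y0 -> W <= y0 + INR (S m) * e ->
  PI - 2 * k / W - 2 * e / k <= left_riemann_sum e y0 m (lorentzian k).
Proof.
  intros Hk He HW Hy0 Hy1.
  pose proof (proj1 (Rabs_le_between' _ _ _) (lorentzian_sum_error k e y0 m Hk He)).
  assert (Htail : forall y, W <= y -> PI / 2 - k / W <= atan (y / k)).
  { intros y Hy.
    pose proof (PI2_sub_atan_le (W / k) ltac:(apply Rdiv_lt_0_compat; lra)) as Hatan.
    replace (/ (W / k)) with (k / W) in Hatan by (field; lra).
    enough (atan (W / k) <= atan (y / k)) by lra.
    destruct (Req_dec W y) as [<- | Hne]; [lra |].
    left. apply atan_increasing.
    apply Rmult_lt_compat_r; [apply Rinv_0_lt_compat |]; lra. }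
  pose proof (Htail _ Hy1). pose proof (Htail _ Hy0).
  replace (- y0 / k) with (- (y0 / k)) in * by (field; lra). rewrite atan_opp in *.
  lra.
Qed.

Lemma le_sqrt_add_sq c y : 0 < c -> c <= sqrt (y ^ 2 + c ^ 2).
Proof.
  intros Hc. rewrite <- (sqrt_pow2 c) at 1 by lra.
  apply sqrt_le_1_alt. nra.
Qed.

Definition grid_sum (Ps e x0 y0 : R) (n m : nat) : R :=
  left_riemann_sum e y0 m (fun y => lorentzian Ps y * inner_sum (y ^ 2 + Ps ^ 2) e x0 n).

Lemma grid_sum_le Ps e x0 y0 n m :
  0 < Ps -> 0 < e ->
  grid_sum Ps e x0 y0 n m <= (4 / 3 + 2 * e / Ps) * (PI + 2 * e / Ps).
Proof.
  intros HP He. unfold grid_sum.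
  eapply Rle_trans.
  - apply left_riemann_sum_le with
      (g := fun y => (4 / 3 + 2 * e / Ps) * lorentzian Ps y); [lra |].
    intros y. rewrite Rmult_comm.
    apply Rmult_le_compat_r; [unfold lorentzian; apply Rdiv_le_0_compat; nra |].
    eapply Rle_trans; [apply inner_sum_le; nra |].
    apply Rplus_le_compat_l. unfold Rdiv. apply Rmult_le_compat_l; [lra |].
    apply Rinv_le_contravar; [lra | now apply le_sqrt_add_sq].
  - rewrite left_riemann_sum_scal.
    apply Rmult_le_compat_l; [pose proof (Rdiv_lt_0_compat e Ps He HP); lra |].
    now apply lorentzian_sum_le.
Qed.

(* The [W]-tail lost by the inner sum is again a Lorentzian, of width [sqrt (W^2 + Ps^2)]. *)
Lemma weighted_inner_sum_ge Ps e x0 n W y :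
  0 < Ps -> 0 < e -> 0 <= W -> W <= - x0 -> W <= x0 + INR (S n) * e ->
  4 / 3 * lorentzian Ps y
  + (- (2 * e / Ps) * lorentzian Ps y
     + - (4 / 3 * (Ps / sqrt (W ^ 2 + Ps ^ 2))) * lorentzian (sqrt (W ^ 2 + Ps ^ 2)) y)
  <= lorentzian Ps y * inner_sum (y ^ 2 + Ps ^ 2) e x0 n.
Proof.
  intros HP He HW Hx0 Hx1. unfold lorentzian.
  set (k := sqrt (W ^ 2 + Ps ^ 2)).
  assert (Hk2 : k ^ 2 = W ^ 2 + Ps ^ 2) by (apply pow2_sqrt; nra).
  assert (Hk : 0 < k) by (apply sqrt_lt_R0; nra).
  set (K := y ^ 2 + Ps ^ 2).
  assert (HK : 0 < K) by (unfold K; nra).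
  apply Rle_trans with (Ps / K * (4 / 3 - 4 / 3 * (K / (W ^ 2 + K)) - 2 * e / Ps)).
  - right. replace (y ^ 2 + k ^ 2) with (W ^ 2 + K) by (rewrite Hk2; unfold K; ring).
    field. repeat split; nra.
  - apply Rmult_le_compat_l; [apply Rdiv_le_0_compat; lra |].
    eapply Rle_trans; [| apply inner_sum_ge with (W := W); lra].
    enough (e / sqrt K <= e / Ps) by lra.
    apply Rmult_le_compat_l; [lra |].
    apply Rinv_le_contravar; [lra | now apply le_sqrt_add_sq].
Qed.

Lemma grid_sum_ge Ps e x0 y0 n m W :
  0 < Ps -> 0 < e -> 0 < W ->
  W <= - x0 -> W <= x0 + INR (S n) * e -> W <= - y0 -> W <= y0 + INR (S m) * e ->
  4 / 3 * (PI - 2 * Ps / W - 2 * e / Ps) - 2 * e / Ps * (PI + 2 * e / Ps)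
    - 4 / 3 * (PI * Ps / W + 2 * e / Ps)
  <= grid_sum Ps e x0 y0 n m.
Proof.
  intros HP He HW Hx0 Hx1 Hy0 Hy1. unfold grid_sum.
  eapply Rle_trans; [| apply left_riemann_sum_le;
    [lra | intros y; apply (weighted_inner_sum_ge Ps e x0 n W y); lra]].
  rewrite !left_riemann_sum_plus, !left_riemann_sum_scal.
  set (k := sqrt (W ^ 2 + Ps ^ 2)).
  assert (HkW : W <= k) by (rewrite <- (sqrt_pow2 W) by lra; apply sqrt_le_1_alt; nra).
  assert (HkP : Ps <= k) by (apply le_sqrt_add_sq; lra).
  pose proof (lorentzian_sum_ge Ps e y0 m W HP He HW Hy0 Hy1) as Hw_ge.
  pose proof (lorentzian_sum_le Ps e y0 m HP He) as Hw_le.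
  pose proof (lorentzian_sum_le k e y0 m ltac:(lra) He) as Hk_le.
  set (Sw := left_riemann_sum e y0 m (lorentzian Ps)) in *.
  set (Sk := left_riemann_sum e y0 m (lorentzian k)) in *.
  assert (Hmid : 2 * e / Ps * Sw <= 2 * e / Ps * (PI + 2 * e / Ps))
    by (apply Rmult_le_compat_l; [apply Rdiv_le_0_compat |]; lra).
  assert (Htail : Ps / k * Sk <= PI * Ps / W + 2 * e / Ps).
  { apply Rle_trans with (Ps / k * (PI + 2 * e / k));
      [apply Rmult_le_compat_l; [apply Rdiv_le_0_compat |]; lra |].
    assert (Ps / k <= Ps / W) by
      (apply Rmult_le_compat_l; [| apply Rinv_le_contravar]; lra).
    assert (Ps / k * (2 * e / k) <= 2 * e / Ps).
    { replace (Ps / k * (2 * e / k)) with (2 * e * (Ps / k ^ 2)) by (field; lra).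
      replace (2 * e / Ps) with (2 * e * (Ps / Ps ^ 2)) by (field; lra).
      apply Rmult_le_compat_l; [lra |].
      apply Rmult_le_compat_l; [lra | apply Rinv_le_contravar; nra]. }
    pose proof PI_RGT_0.
    assert (PI * (Ps / k) <= PI * (Ps / W)) by (apply Rmult_le_compat_l; lra).
    replace (PI * Ps / W) with (PI * (Ps / W)) by (field; lra).
    lra. }
  lra.
Qed.

Lemma grid_sum_error Ps e x0 y0 n m W :
  0 < Ps -> 0 < e <= Ps -> 0 < W ->
  W <= - x0 -> W <= x0 + INR (S n) * e -> W <= - y0 -> W <= y0 + INR (S m) * e ->
  Rabs (grid_sum Ps e x0 y0 n m - 4 * PI / 3) <= 20 * (e / Ps) + 8 * (Ps / W).
Proof.
  intros HP He HW Hx0 Hx1 Hy0 Hy1.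
  pose proof (grid_sum_le Ps e x0 y0 n m HP ltac:(lra)).
  pose proof (grid_sum_ge Ps e x0 y0 n m W HP ltac:(lra) HW Hx0 Hx1 Hy0 Hy1).
  set (u := e / Ps) in *. set (v := Ps / W) in *.
  replace (2 * e / Ps) with (2 * u) in * by (unfold u; field; lra).
  replace (2 * Ps / W) with (2 * v) in * by (unfold v; field; lra).
  replace (PI * Ps / W) with (PI * v) in * by (unfold v; field; lra).
  assert (Hu : 0 < u <= 1).
  { unfold u. split; [apply Rdiv_lt_0_compat; lra |].
    apply Rle_div_l; lra. }
  assert (Hv : 0 < v) by (apply Rdiv_lt_0_compat; lra).
  pose proof PI_RGT_0. pose proof PI_4.
  assert (u * PI <= 4 * u) by nra. assert (PI * v <= 4 * v) by nra.
  assert (u * u <= u) by nra.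
  apply Rabs_le. split; nra.
Qed.

Lemma grid_sum_converges Ps Phi0 Om0 eta :
  0 < Ps -> 0 < eta ->
  exists e0, 0 < e0 /\
    forall e, 0 < e <= e0 ->
      exists M : nat, forall a b : nat, (M <= a)%nat -> (M <= b)%nat ->
        Rabs (grid_sum Ps e (- (INR a * e) - Phi0) (- (INR b * e) - Om0) (2 * a) (2 * b)
              - 4 * PI / 3) < eta.
Proof.
  intros HP Heta.
  exists (Rmin Ps (eta * Ps / 40)).
  split; [apply Rmin_glb_lt; [lra | apply Rdiv_lt_0_compat; nra] |].
  intros e He.
  pose proof (Rmin_l Ps (eta * Ps / 40)). pose proof (Rmin_r Ps (eta * Ps / 40)).
  set (W := 32 * Ps / eta).
  assert (HW : 0 < W) by (apply Rdiv_lt_0_compat; lra).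
  destruct (INR_unbounded ((W + Rabs Phi0 + Rabs Om0) / e)) as [M HM].
  exists M. intros a b Ha Hb.
  assert (Hfar : forall c, (M <= c)%nat -> W + Rabs Phi0 + Rabs Om0 <= INR c * e).
  { intros c Hc. apply le_INR in Hc.
    apply Rle_div_l; [lra |]. lra. }
  pose proof (Hfar a Ha). pose proof (Hfar b Hb).
  pose proof (Rle_abs Phi0). pose proof (Rle_abs (- Phi0)). rewrite Rabs_Ropp in *.
  pose proof (Rle_abs Om0). pose proof (Rle_abs (- Om0)). rewrite Rabs_Ropp in *.
  assert (HS : forall c, INR (S (2 * c)) = 2 * INR c + 1)
    by (intros c; rewrite S_INR, mult_INR; simpl; ring).
  eapply Rle_lt_trans; [apply grid_sum_error with (W := W); rewrite ?HS; nra |].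
  assert (20 * (e / Ps) <= eta / 2).
  { apply Rmult_le_reg_r with Ps; [lra |].
    replace (20 * (e / Ps) * Ps) with (20 * e) by (field; lra). lra. }
  replace (8 * (Ps / W)) with (eta / 4) by (unfold W; field; lra).
  lra.
Qed.

Lemma Cmod_h_entry_sq A d lam r th ph ny nz :
  0 < A -> 0 < d -> 0 < r -> 0 < Psi th ph ->
  Cmod (h_entry A d lam r th ph ny nz) ^ 2
  = zeta A d / (4 * PI) * (d / r) ^ 2 *
    lorentzian (Psi th ph) (nz * (d / r) - Omega th) *
    (((nz * (d / r) - Omega th) ^ 2 + Psi th ph ^ 2) ^ 2
     / sqrt ((ny * (d / r) - Phi th ph) ^ 2
             + ((nz * (d / r) - Omega th) ^ 2 + Psi th ph ^ 2)) ^ 5).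
Proof.
  intros HA Hd Hr HP. unfold h_entry, Cmod, rdist, zeta, lorentzian. cbv zeta. cbn [fst snd].
  set (Ps := Psi th ph) in *.
  set (X := ny * (d / r) - Phi th ph). set (Y := nz * (d / r) - Omega th).
  rewrite <- Rplus_assoc.
  assert (HD : 0 < X ^ 2 + Y ^ 2 + Ps ^ 2) by nra.
  pose proof (sqrt_lt_R0 _ HD).
  set (s := sqrt (X ^ 2 + Y ^ 2 + Ps ^ 2)) in *.
  set (phase := 2 * PI / lam * (r * s)).
  pose proof PI_RGT_0.
  replace (r * Omega th - nz * d) with (- r * Y) by (unfold Y; field; lra).
  set (amp2 := A * (r ^ 3 * Ps ^ 3 + r * Ps * (- r * Y) ^ 2) / (4 * PI * (r * s) ^ 5)).
  assert (Hamp : 0 <= amp2).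
  { unfold amp2. apply Rdiv_le_0_compat; [| apply Rmult_lt_0_compat; [lra | apply pow_lt; nra]].
    apply Rmult_le_pos; [lra |].
    replace (r ^ 3 * Ps ^ 3 + r * Ps * (- r * Y) ^ 2) with (r ^ 3 * Ps * (Ps ^ 2 + Y ^ 2)) by ring.
    apply Rmult_le_pos; [apply Rmult_le_pos; [apply pow_le |] |]; nra. }
  rewrite pow2_sqrt by nra.
  replace ((sqrt amp2 * cos phase) ^ 2 + (- (sqrt amp2 * sin phase)) ^ 2)
    with (sqrt amp2 ^ 2 * (sin phase ^ 2 + cos phase ^ 2)) by ring.
  rewrite pow2_sqrt, <- (Rsqr_pow2 (sin phase)), <- (Rsqr_pow2 (cos phase)), sin2_cos2 by lra.
  unfold amp2. field. repeat split; nra.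
Qed.

Lemma sum_f_R0_switch (u : nat -> nat -> R) n m :
  sum_f_R0 (fun i => sum_f_R0 (u i) m) n = sum_f_R0 (fun j => sum_f_R0 (fun i => u i j) n) m.
Proof.
  induction n as [|n IH]; [reflexivity |].
  rewrite tech5, IH, <- sum_plus. apply sum_eq. intros j _. now rewrite tech5.
Qed.

Lemma hnorm_sq_grid_sum A d lam r th ph a b :
  0 < A -> 0 < d -> 0 < r -> 0 < Psi th ph ->
  hnorm_sq A d lam r th ph a b
  = zeta A d / (4 * PI) *
    grid_sum (Psi th ph) (d / r) (- (INR a * (d / r)) - Phi th ph)
             (- (INR b * (d / r)) - Omega th) (2 * a) (2 * b).
Proof.
  intros HA Hd Hr HP. unfold hnorm_sq, grid_sum, inner_sum, left_riemann_sum.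
  rewrite sum_f_R0_switch, scal_sum.
  apply sum_eq. intros l _.
  rewrite (Rmult_comm _ (zeta A d / (4 * PI))), !scal_sum.
  apply sum_eq. intros k _.
  rewrite Cmod_h_entry_sq by assumption.
  replace (- (INR a * (d / r)) - Phi th ph + INR k * (d / r))
    with ((INR k - INR a) * (d / r) - Phi th ph) by ring.
  replace (- (INR b * (d / r)) - Omega th + INR l * (d / r))
    with ((INR l - INR b) * (d / r) - Omega th) by ring.
  ring.
Qed.

Lemma hnorm_sq_limit A d lam th ph eta :
  0 < A -> 0 < d -> 0 < Psi th ph -> 0 < eta ->
  exists R0, 0 < R0 /\
    forall r, R0 <= r ->
      exists M : nat, forall a b : nat, (M <= a)%nat -> (M <= b)%nat ->
        Rabs (hnorm_sq A d lam r th ph a b - zeta A d / 3) < eta.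
Proof.
  intros HA Hd HP Heta.
  set (z := zeta A d).
  assert (Hz : 0 < z) by (apply Rdiv_lt_0_compat; [| apply pow_lt]; lra).
  pose proof PI_RGT_0.
  destruct (grid_sum_converges (Psi th ph) (Phi th ph) (Omega th) (4 * PI * eta / z) HP)
    as [e0 [He0 Hgrid]]; [apply Rdiv_lt_0_compat; nra |].
  exists (d / e0). split; [apply Rdiv_lt_0_compat; lra |].
  intros r Hr. apply Rle_div_l in Hr; [| lra].
  assert (Hr0 : 0 < r) by nra.
  destruct (Hgrid (d / r)) as [M HM].
  { split; [apply Rdiv_lt_0_compat | apply Rle_div_l]; lra. }
  exists M. intros a b Ha Hb.
  rewrite hnorm_sq_grid_sum by assumption. fold z.
  specialize (HM a b Ha Hb).
  set (T := grid_sum _ _ _ _ _ _) in *.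
  replace (z / (4 * PI) * T - z / 3) with (z / (4 * PI) * (T - 4 * PI / 3)) by (field; lra).
  rewrite Rabs_mult, Rabs_pos_eq by (apply Rdiv_le_0_compat; lra).
  apply Rmult_lt_compat_l with (r := z / (4 * PI)) in HM; [| apply Rdiv_lt_0_compat; lra].
  replace (z / (4 * PI) * (4 * PI * eta / z)) with eta in HM by (field; lra).
  exact HM.
Qed.

Lemma log2_rate_near kappa c s0 delta :
  0 <= c -> 0 < s0 -> 0 < delta ->
  exists eta, 0 < eta /\
    forall S, Rabs (S - s0) < eta ->
      Rabs (kappa * log2 (1 + c * sqrt S ^ 4) - kappa * log2 (1 + c * s0 ^ 2)) < delta.
Proof.
  intros Hc Hs0 Hdelta.
  set (F S := kappa * log2 (1 + c * sqrt S ^ 4)).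
  assert (HF : continuity_pt F s0).
  { apply continuity_pt_filterlim. apply (ex_derive_continuous (V := R_NormedModule)).
    unfold F, log2. auto_derive. repeat split; try lra.
    pose proof (pow_le (sqrt s0) 4 (sqrt_pos s0)). nra. }
  destruct (proj1 (continuity_pt_locally F s0) HF (mkposreal delta Hdelta)) as [eta Heta].
  exists eta. split; [apply cond_pos |].
  intros S HS.
  replace (s0 ^ 2) with (sqrt s0 ^ 4)
    by (replace 4%nat with (2 * 2)%nat by reflexivity; rewrite pow_mult, pow2_sqrt; lra).
  exact (Heta S HS).
Qed.

Theorem corollary5 :
  forall (A d lam th ph p alpha : R) (L : nat),
    0 < A -> 0 < d -> A < d ^ 2 -> 0 < lam ->
    0 <= th <= PI -> - (PI / 2) <= ph <= PI / 2 -> 0 < Psi th ph ->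
    0 < p -> (0 < L)%nat -> 0 < alpha ->
    forall delta : R, 0 < delta ->
      exists R0 : R, 0 < R0 /\
        forall r : R, R0 <= r ->
          exists M : nat, forall a b : nat, (M <= a)%nat -> (M <= b)%nat ->
            Rabs (rate_ds p alpha L A d lam r th ph a b
                  - / INR L * log2 (1 + p * INR L * alpha * zeta A d ^ 2 / 9))
            < delta.
Proof.
  (* Of the geometric hypotheses only [0 < Psi th ph] matters for the limit. *)
  intros A d lam th ph p alpha L HA Hd _ _ _ _ HP Hp HL Halpha delta Hdelta.
  assert (Hz : 0 < zeta A d) by (apply Rdiv_lt_0_compat; [| apply pow_lt]; lra).
  assert (Hc : 0 <= p * INR L * alpha)
    by (pose proof (lt_0_INR L HL); apply Rmult_le_pos; [apply Rmult_le_pos |]; lra).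
  destruct (log2_rate_near (/ INR L) _ (zeta A d / 3) delta Hc ltac:(lra) Hdelta)
    as [eta [Heta Hrate]].
  destruct (hnorm_sq_limit A d lam th ph eta HA Hd HP Heta) as [R0 [HR0 Hlim]].
  exists R0. split; [exact HR0 |].
  intros r Hr. destruct (Hlim r Hr) as [M HM].
  exists M. intros a b Ha Hb.
  replace (p * INR L * alpha * zeta A d ^ 2 / 9)
    with (p * INR L * alpha * (zeta A d / 3) ^ 2) by field.
  apply Hrate, HM; assumption.
Qed.
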